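(* Let $G=\mathbb{Z}_{3,0}^{4}\rtimes S_4$, where $S_4$ acts on $\mathbb{Z}_{3,0}^4$ by permuting coordinates. Then $\mathrm{mdim}_{\mathbb{C}}(G)=4$ and $\mathrm{mdim}_{\mathbb{R}}(G)=6$. Every faithful complex representation of $G$ of dimension $4$ is irreducible and non-real; consequently no faithful real representation of $G$ of minimal dimension $6$ is obtained as the realification of a faithful complex representation of minimal dimension $4$.
   Context: For integers $k>1$, $m>0$, $\mathbb{Z}_{k,0}^m$ is the kernel of the homomorphism $\mathbb{Z}_k^m\to\mathbb{Z}_k$ sending an $m$-tuple to the sum of its entries. For a finite group $G$ and field $F$, $\mathrm{mdim}_F(G)$ is the smallest dimension of a faithful representation of $G$ over $F$. A complex representation is called real if it is obtained by extension of scalars from a representation over $\mathbb{R}$, and non-real otherwise. The realification of a complex representation $V$, decomposed as a sum of irreducible real pieces $V_i$ and irreducible non-real pieces $W_j$, is $V\oplus\bigoplus_j\overline{W_j}$, which is realizable over $\mathbb{R}$. *)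

From HB Require Import structures.
From mathcomp Require Import all_boot all_order all_algebra all_fingroup.
From mathcomp Require Import all_solvable all_character.
From mathcomp Require Import complex.
From mathcomp Require Import Rstruct.
From Stdlib Require Import Reals.

Set Implicit Arguments.
Unset Strict Implicit.
Unset Printing Implicit Defensive.

Import GRing.Theory.
Local Open Scope ring_scope.

Definition S4 : {group {perm 'I_4}} := [set: {perm 'I_4}]%G.

(* S_4 acts on Z_3^4 by permuting coordinates: (v *m perm_mx s) 0 j = v 0 (s^-1 j). *)
Definition perm4_mx (s : {perm 'I_4}) : 'M['Z_3]_4 := perm_mx s.

Lemma perm4_mx_repr : mx_repr S4 perm4_mx.
Proof. by split=> [|s t _ _]; rewrite /perm4_mx ?perm_mx1 ?perm_mxM. Qed.

Canonical perm4_repr := MxRepresentation perm4_mx_repr.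

Definition perm4_act := ('MR perm4_repr)%gact.

Definition Z30_set : {set 'rV['Z_3]_4} := [set v : 'rV['Z_3]_4 | \sum_(j < 4) v 0 j == 0].

Lemma Z30_group_set : group_set Z30_set.
Proof.
apply/group_setP; split=> [|u v]; rewrite !inE.
  by apply/eqP; apply: big1 => j _; rewrite mxE.
move=> /eqP su /eqP sv; apply/eqP.
have -> : (u * v)%g = u + v by [].
by rewrite (eq_bigr (fun j => u 0 j + v 0 j)) ?big_split /= ?su ?sv ?addr0 // => j _; rewrite mxE.
Qed.

Canonical Z30 : {group 'rV['Z_3]_4} := group Z30_group_set.

Lemma perm4_acts_Z30 : {acts S4, on group Z30 | perm4_act}.
Proof.
split; last exact: subsetT.
apply/subsetP=> s _; rewrite !inE /=; apply/subsetP=> v; rewrite !inE /=.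
rewrite mx_repr_actE ?inE //= /perm4_mx -[s]invgK -col_permE.
move=> /eqP sv; apply/eqP; rewrite -[RHS]sv.
rewrite (reindex_inj (@perm_inj _ s)) /=.
by apply: eq_bigr => j _; rewrite mxE permK.
Qed.

Definition Z30_rtimes_S4 := sdprod_by (actby_groupAction perm4_acts_Z30).

Definition G5p3 : {group Z30_rtimes_S4} := [set: Z30_rtimes_S4]%G.

Definition RR : rcfType := Rdefinitions.R.
Notation CC := (complex RR).

Definition has_mdim (F : fieldType) (gT : finGroupType) (G : {group gT}) (d : nat) :=
  (exists rG : mx_representation F G d, mx_faithful rG) /\
  (forall n (rG : mx_representation F G n), mx_faithful rG -> leq d n).

Definition is_real_repr (gT : finGroupType) (G : {group gT}) n
    (rC : mx_representation CC G n) : Prop :=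
  exists rR : mx_representation RR G n,
    mx_rsim (map_repr (real_complex RR) rR) rC.

Definition conj_repr (gT : finGroupType) (G : {group gT}) n
    (rC : mx_representation CC G n) := map_repr (@conjc RR) rC.

Section DirectSum.
Variables (F : fieldType) (gT : finGroupType) (G : {group gT}) (n1 n2 : nat).
Variables (r1 : mx_representation F G n1) (r2 : mx_representation F G n2).

Definition dsum_mx (x : gT) : 'M[F]_(n1 + n2) := block_mx (r1 x) 0 0 (r2 x).

Lemma dsum_mx_repr : mx_repr G dsum_mx.
Proof.
split.
  rewrite /dsum_mx !repr_mx1. by rewrite -scalar_mx_block.
move=> x y Gx Gy; rewrite /dsum_mx.
by rewrite mulmx_block !mulmx0 !mul0mx !addr0 !add0r !repr_mxM.
Qed.

Canonical dsum_repr := MxRepresentation dsum_mx_repr.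
End DirectSum.

(* rW is a realification of rV: for some decomposition of rV into a direct   *)
(* sum of irreducible (simple) submodules U_i, with the non-real ones being  *)
(* the U_i for i outside P, rW is similar to rV ⊕ conj(⊕_{i ∉ P} U_i).        *)
Definition realification_of (gT : finGroupType) (G : {group gT})
    n (rV : mx_representation CC G n) m (rW : mx_representation CC G m) : Prop :=
  exists (I : finType) (U : I -> 'M[CC]_n) (P : pred I),
    [/\ mxdirect (\sum_i U i), (\sum_i U i == 1%:M)%MS,
        forall i, mxsimple rV (U i),
        forall i, P i <-> (exists modU : mxmodule rV (U i),
                              is_real_repr (submod_repr modU)) &
        exists modN : mxmodule rV (\sum_(i | ~~ P i) U i)%MS,
          mx_rsim rW (dsum_repr rV (conj_repr (submod_repr modN)))].

From HB Require Import structures.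
From mathcomp Require Import all_boot all_order all_algebra all_fingroup.
From mathcomp Require Import all_solvable all_character.
From mathcomp Require Import complex.
From mathcomp Require Import Rstruct.
From mathcomp Require Import ring lra.

(* The abelian normal subgroup A = Z_{3,0}^4, identified with Z_3^3, acts diagonalisably
   in every complex representation of G, and the characters of A that occur form a set
   stable under the action of S_4 on the dual of A, and also under c |-> -c when the
   representation is real.  A faithful representation has a non-trivial such character; a
   finite computation shows that its S_4-orbit has at least 4 elements, and at least 6 once
   negation is allowed, which gives the lower bounds.  They are attained in dimension 4 by the
   monomial representation (x, s) |-> perm(s) diag(omega^(x_i)), and in dimension 6 by
   letting S_4 permute the 2-subsets S of {0,1,2,3} while x acts on the plane spanned by S
   and its complement through a real form of omega^(sum_(i in S) x_i).
   In a faithful 4-dimensional representation a proper submodule and its quotient have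
   dimension < 4, so A acts trivially on both; an element of order 3 of A then acts
   unipotently, hence trivially in characteristic 0, a contradiction.  So these
   representations are irreducible, and they are not real since real faithful ones have
   dimension at least 6.  Finally the realification of an irreducible representation of
   dimension 4 has dimension 4 or 8, never 6. *)

Set Implicit Arguments.
Unset Strict Implicit.
Unset Printing Implicit Defensive.

Import GRing.Theory Num.Theory.
Local Open Scope ring_scope.

(** * Characters of Z_3^3 *)

Section CubeRootOfUnity.
Local Open Scope complex_scope.

Definition omega : CC := (- 2^-1) +i* (Num.sqrt 3 / 2).

Let sqrt3_sqr : Num.sqrt 3 * Num.sqrt 3 = 3 :> RR.
Proof. by rewrite -expr2 sqr_sqrtr // ler0n. Qed.

Lemma omega_sqr : omega ^+ 2 = (- 2^-1) +i* (- (Num.sqrt 3 / 2)).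
Proof.
rewrite expr2; apply/eqP; rewrite eq_complex /=.
by apply/andP; split; apply/eqP; [move: sqrt3_sqr; nra | field].
Qed.

Lemma omega_conj : omega^* = omega ^+ 2.
Proof. by rewrite omega_sqr. Qed.

Lemma omega_prim : 3.-primitive_root omega.
Proof.
have omega_neq1 (z : CC) : complex.Re z = - 2^-1 -> z != 1.
  by move=> Rez; apply/eqP => z1; move: Rez; rewrite z1 /=; lra.
apply/andP; split=> //; apply/forallP => -[[|[|[|//]]] lti] /=; rewrite unity_rootE.
- by rewrite expr1 (negbTE (omega_neq1 _ _)).
- by rewrite omega_sqr (negbTE (omega_neq1 _ _)).
rewrite exprS omega_sqr eqxx; apply/eqP; rewrite eq_complex /=.
by apply/andP; split; apply/eqP; [move: sqrt3_sqr; nra | field].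
Qed.

End CubeRootOfUnity.

Definition omega_exp (t : 'Z_3) : CC := omega ^+ t.

Lemma omega_expD t u : omega_exp (t + u) = omega_exp t * omega_exp u.
Proof. by rewrite /omega_exp -exprD -[in RHS](prim_expr_mod omega_prim). Qed.

Lemma omega_exp_eq1 t : (omega_exp t == 1) = (t == 0).
Proof.
by rewrite /omega_exp -(expr0 omega) (eq_prim_root_expr omega_prim) mod0n modn_small.
Qed.

Lemma omega_exp_neq0 t : omega_exp t != 0.
Proof. by rewrite expf_neq0 // (prim_root_eq0 omega_prim). Qed.

Lemma omega_exp_conj t : (omega_exp t)^*%C = omega_exp (- t).
Proof.
have -> : (omega ^+ t)^*%C = omega^*%C ^+ t by rewrite rmorphXn.
rewrite /omega_exp omega_conj -exprM; apply/eqP.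
by rewrite (eq_prim_root_expr omega_prim); case: t => [[|[|[|]]] ?].
Qed.

Definition Z3x3 := ('Z_3 * 'Z_3 * 'Z_3)%type.

Definition dot (c k : Z3x3) : 'Z_3 := c.1.1 * k.1.1 + c.1.2 * k.1.2 + c.2 * k.2.

Definition chi (c k : Z3x3) : CC := omega_exp (dot c k).

Lemma dotDl c d k : dot (c + d) k = dot c k + dot d k.
Proof. by rewrite /dot /=; ring. Qed.

Lemma dotDr c k l : dot c (k + l) = dot c k + dot c l.
Proof. by rewrite /dot /=; ring. Qed.

Lemma dotNl c k : dot (- c) k = - dot c k.
Proof. by rewrite /dot /=; ring. Qed.

Lemma dotNr c k : dot c (- k) = - dot c k.
Proof. by rewrite /dot /=; ring. Qed.

Lemma chiDl c d k : chi (c + d) k = chi c k * chi d k.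
Proof. by rewrite /chi dotDl omega_expD. Qed.

Lemma chiDr c k l : chi c (k + l) = chi c k * chi c l.
Proof. by rewrite /chi dotDr omega_expD. Qed.

Lemma chiNr c k : chi c (- k) * chi c k = 1.
Proof. by rewrite -chiDr addNr /chi /dot /= !mulr0 !addr0. Qed.

Lemma chi0l k : chi 0 k = 1.
Proof. by rewrite /chi /dot /= !mul0r !addr0. Qed.

Lemma chi_conj c k : (chi c k)^*%C = chi (- c) k.
Proof. by rewrite /chi omega_exp_conj dotNl. Qed.

Lemma card_Z3x3 : #|{: Z3x3}| = 27%N.
Proof. by rewrite !card_prod !card_ord. Qed.

Lemma sum_chi k : \sum_c chi c k = if k == 0 then 27%:R else 0.
Proof.
case: ifPn => [/eqP -> | k_neq0].
  rewrite (eq_bigr (fun=> 1)) => [|c _]; first by rewrite sumr_const card_Z3x3.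
  by rewrite /chi /dot /= !mulr0 !addr0.
have [c0 dot_c0_neq0] : exists c0, dot c0 k != 0.
  move: k_neq0; case: k => [[a b] d]; rewrite !xpair_eqE => k_neq0.
  have [a0 | a0] := eqVneq a 0; last by exists (1, 0, 0); rewrite /dot /= mul1r !mul0r !addr0.
  have [b0 | b0] := eqVneq b 0; last by exists (0, 1, 0); rewrite /dot /= mul1r !mul0r add0r addr0.
  have [d0 | d0] := eqVneq d 0; last by exists (0, 0, 1); rewrite /dot /= mul1r !mul0r !add0r.
  by rewrite a0 b0 d0 !eqxx in k_neq0.
have chi_c0_neq1 : chi c0 k != 1 by rewrite /chi omega_exp_eq1.
have shift : \sum_c chi c k = chi c0 k * \sum_c chi c k.
  by rewrite big_distrr (reindex_inj (addrI c0)) /=; apply: eq_bigr => c _; rewrite chiDl.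
apply/eqP; have : (1 - chi c0 k) * \sum_c chi c k == 0 by rewrite mulrBl mul1r -shift subrr.
by rewrite mulf_eq0 subr_eq0 eq_sym (negbTE chi_c0_neq1).
Qed.

(** * Weight spaces of a representation of Z_3^3 *)

Lemma mxtrace_idem (F : fieldType) m (P : 'M[F]_m) : P *m P = P -> \tr P = (\rank P)%:R.
Proof.
move=> PP; have base_mul : col_base P *m row_base P = P by rewrite mulmx_base.
have base_mul_swap : row_base P *m col_base P = 1%:M.
  apply: (row_free_inj (row_base_free P)); rewrite mul1mx.
  apply: (row_full_inj (col_base_full P)).
  by rewrite (mulmxA (col_base P)) (mulmxA (col_base P) (row_base P)) base_mul -mulmxA base_mul PP.
by rewrite -{1}base_mul mxtrace_mulC base_mul_swap mxtrace1.
Qed.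


Section WeightSpaces.

Variables (n : nat) (R : Z3x3 -> 'M[CC]_n).
Hypotheses (R0 : R 0 = 1%:M) (RD : forall k l, R (k + l) = R k *m R l).

Let nat27_neq0 : 27%:R != 0 :> CC. Proof. by rewrite pnatr_eq0. Qed.

Definition weight_proj c : 'M[CC]_n := 27%:R^-1 *: \sum_(k : Z3x3) chi c (- k) *: R k.

Definition weights := [set c | weight_proj c != 0].

Lemma mul_R_weight_proj k c : R k *m weight_proj c = chi c k *: weight_proj c.
Proof.
rewrite /weight_proj -scalemxAr scalerA mulrC -scalerA; congr (_ *: _).
rewrite mulmx_sumr scaler_sumr [RHS](reindex_inj (addrI k)) /=; apply: eq_bigr => l _.
by rewrite -scalemxAr -RD scalerA -chiDr opprD addNKr.
Qed.

Lemma weight_proj_idem c : weight_proj c *m weight_proj c = weight_proj c.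
Proof.
rewrite {1}/weight_proj -scalemxAl mulmx_suml.
rewrite (eq_bigr (fun=> weight_proj c)) => [|k _]; last first.
  by rewrite -scalemxAl mul_R_weight_proj scalerA chiNr scale1r.
by rewrite sumr_const card_Z3x3 -(scaler_nat 27 (weight_proj c)) scalerA mulVf ?scale1r.
Qed.

Lemma sum_weight_proj : \sum_c weight_proj c = 1%:M.
Proof.
rewrite /weight_proj -scaler_sumr exchange_big /=.
under eq_bigr => k _ do rewrite -scaler_suml sum_chi oppr_eq0.
rewrite (bigD1 (0 : Z3x3)) //= big1 => [|k /negbTE ->]; last by rewrite scale0r.
by rewrite R0 addr0 scalerA mulVf ?scale1r.
Qed.

Lemma R_weight_decomp k : R k = \sum_c chi c k *: weight_proj c.
Proof.
rewrite -[R k]mulmx1 -sum_weight_proj mulmx_sumr.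
by apply: eq_bigr => c _; rewrite mul_R_weight_proj.
Qed.

Lemma card_weights : (#|weights| <= n)%N.
Proof.
have -> : n = (\sum_c \rank (weight_proj c))%N.
  apply/eqP; rewrite -(eqr_nat CC) -mxtrace1 -sum_weight_proj raddf_sum natr_sum /=.
  by apply/eqP/eq_bigr => c _; rewrite mxtrace_idem ?weight_proj_idem.
rewrite -sum1_card big_mkcond /=; apply: leq_sum => c _.
by rewrite inE; case: ifP => // nz; rewrite lt0n mxrank_eq0.
Qed.

Lemma nonzero_weight k : R k != 1%:M -> exists2 c : Z3x3, c != 0 & c \in weights.
Proof.
move=> Rk_neq1.
case: (pickP [pred c | (c != 0) && (c \in weights)]) => [c /andP [] | no_wt]; first by exists c.
have P0 c : c != 0 -> weight_proj c = 0.
  by move=> c_neq0; move: (no_wt c); rewrite /= c_neq0 inE => /negbFE/eqP.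
have Rk : R k = weight_proj 0.
  rewrite R_weight_decomp (bigD1 (0 : Z3x3)) //= big1 ?addr0 => [|c /P0 ->].
    by rewrite chi0l scale1r.
  by rewrite scaler0.
move: Rk_neq1; rewrite Rk -sum_weight_proj (bigD1 (0 : Z3x3)) //= big1 ?addr0 ?eqxx // => c /P0.
Qed.

Lemma weight_proj_intertwine (M : 'M[CC]_n) (sg ta : Z3x3 -> Z3x3) :
    involutive sg -> (forall c k, dot c (sg k) = dot (ta c) k) ->
    (forall k, R k *m M = M *m R (sg k)) ->
  forall c, weight_proj c *m M = M *m weight_proj (ta c).
Proof.
move=> sgK dot_sg RM c; rewrite /weight_proj -scalemxAl -scalemxAr; congr (_ *: _).
rewrite mulmx_suml mulmx_sumr (reindex_inj (can_inj sgK)) /=; apply: eq_bigr => k _.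
by rewrite -scalemxAl RM sgK -scalemxAr /chi dotNr dot_sg -dotNr.
Qed.

Lemma weights_closed (M : 'M[CC]_n) (sg ta : Z3x3 -> Z3x3) :
    M \in unitmx -> involutive sg -> (forall c k, dot c (sg k) = dot (ta c) k) ->
    (forall k, R k *m M = M *m R (sg k)) ->
  forall c, c \in weights -> ta c \in weights.
Proof.
move=> Munit sgK dot_sg RM c; rewrite !inE; apply: contraNneq => Pta0.
rewrite -[weight_proj c](mulmxK Munit) (weight_proj_intertwine sgK dot_sg RM).
by rewrite Pta0 mulmx0 mul0mx.
Qed.

Lemma weights_closedN : (forall k, map_mx conjc (R k) = R k) ->
  forall c, c \in weights -> - c \in weights.
Proof.
move=> R_real c; rewrite !inE; apply: contraNneq => PN0.
rewrite -(map_mx_eq0 (@conjc RR)) -PN0; apply/eqP/matrixP => i j.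
rewrite !mxE rmorphM fmorphV rmorph_nat !summxE rmorph_sum; congr (_ * _).
apply: eq_bigr => k _; rewrite !mxE rmorphM /= chi_conj; congr (_ * _).
by move/matrixP: (R_real k) => /(_ i j); rewrite mxE.
Qed.

End WeightSpaces.

(** * The group Z_{3,0}^4 x| S_4 *)

Definition Z30_act := actby_groupAction perm4_acts_Z30.

Definition inZ30 (x : 'rV['Z_3]_4) : Z30_rtimes_S4 := sdpair1 Z30_act x.

Definition inS4 (s : {perm 'I_4}) : Z30_rtimes_S4 := sdpair2 Z30_act s.

Lemma in_G5p3 (g : Z30_rtimes_S4) : g \in G5p3.
Proof. by rewrite inE. Qed.

Lemma Z30_actE x s : x \in Z30 -> Z30_act x s = x *m perm4_mx s.
Proof.
move=> Z30x; rewrite /Z30_act /= actbyE //.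
by change (mx_repr_act perm4_repr x s = x *m perm4_mx s); rewrite mx_repr_actE.
Qed.

Lemma inZ30_perm x s : x \in Z30 -> inZ30 (x *m perm4_mx s) = (inZ30 x ^ inS4 s)%g.
Proof. by move=> Z30x; rewrite -Z30_actE // /inZ30 /inS4 sdpair_act. Qed.

Lemma inZ30D x y : x \in Z30 -> y \in Z30 -> inZ30 (x + y) = (inZ30 x * inZ30 y)%g.
Proof. exact: morphM. Qed.

Lemma inZ30_0 : inZ30 0 = 1%g.
Proof. exact: morph1. Qed.

Lemma inZ30_eq1 x : x \in Z30 -> (inZ30 x == 1%g) = (x == 0).
Proof.
move=> Z30x; apply/eqP/eqP => [x1 | ->]; last exact: morph1.
have /injmP inj := injm_sdpair1 Z30_act.
by apply: (inj x 1%g Z30x (group1 _)); rewrite /= morph1.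
Qed.

Lemma mul_perm4_mx (x : 'rV['Z_3]_4) s j : (x *m perm4_mx s) 0 j = x 0 (s^-1 j)%g.
Proof. by rewrite /perm4_mx -[s]invgK -col_permE mxE invgK. Qed.

Definition i0 : 'I_4 := @Ordinal 4 0 isT.
Definition i1 : 'I_4 := @Ordinal 4 1 isT.
Definition i2 : 'I_4 := @Ordinal 4 2 isT.
Definition i3 : 'I_4 := @Ordinal 4 3 isT.

Lemma ord4P (j : 'I_4) : [\/ j = i0, j = i1, j = i2 | j = i3].
Proof.
by case: j => [[|[|[|[|//]]]] ?]; [constructor 1 | constructor 2 | constructor 3 | constructor 4];
  apply: val_inj.
Qed.

Lemma ord4_two_others (i : 'I_4) : exists j k, [/\ i != j, i != k & j != k].
Proof.
by case: (ord4P i) => ->; [exists i1, i2 | exists i0, i2 | exists i0, i1 | exists i0, i1].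
Qed.

Definition emb (k : Z3x3) : 'rV['Z_3]_4 :=
  \row_j [:: - (k.1.1 + k.1.2 + k.2); k.1.1; k.1.2; k.2]`_j.

Lemma emb_Z30 k : emb k \in Z30.
Proof. by rewrite inE /= !big_ord_recl big_ord0 !mxE /=; apply/eqP; ring. Qed.

Lemma embD k l : emb (k + l) = emb k + emb l.
Proof. by apply/rowP => j; rewrite !mxE; case: (ord4P j) => -> /=; ring. Qed.

Lemma emb0 : emb 0 = 0.
Proof. by apply/rowP => j; rewrite !mxE; case: (ord4P j) => -> /=; ring. Qed.

Lemma emb_eq0 k : (emb k == 0) = (k == 0).
Proof.
apply/eqP/eqP => [/rowP k0 | ->]; last exact: emb0.
by case: k k0 => [[a b] d] k0; move: (k0 i1) (k0 i2) (k0 i3); rewrite !mxE /= => -> -> ->.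
Qed.

Definition tr01 (k : Z3x3) : Z3x3 := (- (k.1.1 + k.1.2 + k.2), k.1.2, k.2).
Definition tr12 (k : Z3x3) : Z3x3 := (k.1.2, k.1.1, k.2).
Definition tr23 (k : Z3x3) : Z3x3 := (k.1.1, k.2, k.1.2).

Lemma tr01K : involutive tr01.
Proof. by case=> [[a b] d]; rewrite /tr01 /=; congr (_, _, _); ring. Qed.

Lemma tr12K : involutive tr12. Proof. by case=> [[a b] d]. Qed.

Lemma tr23K : involutive tr23. Proof. by case=> [[a b] d]. Qed.

Lemma emb_tr01 k : emb k *m perm4_mx (tperm i0 i1) = emb (tr01 k).
Proof.
apply/rowP => j; rewrite mul_perm4_mx tpermV.
by case: (ord4P j) => ->; rewrite ?tpermL ?tpermR ?tpermD // !mxE /=; ring.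
Qed.

Lemma emb_tr12 k : emb k *m perm4_mx (tperm i1 i2) = emb (tr12 k).
Proof.
apply/rowP => j; rewrite mul_perm4_mx tpermV.
by case: (ord4P j) => ->; rewrite ?tpermL ?tpermR ?tpermD // !mxE /=; ring.
Qed.

Lemma emb_tr23 k : emb k *m perm4_mx (tperm i2 i3) = emb (tr23 k).
Proof.
apply/rowP => j; rewrite mul_perm4_mx tpermV.
by case: (ord4P j) => ->; rewrite ?tpermL ?tpermR ?tpermD // !mxE /=; ring.
Qed.

Definition tr01_dual (c : Z3x3) : Z3x3 := (- c.1.1, c.1.2 - c.1.1, c.2 - c.1.1).

Lemma dot_tr01 c k : dot c (tr01 k) = dot (tr01_dual c) k.
Proof. by rewrite /dot /=; ring. Qed.

Lemma dot_tr12 c k : dot c (tr12 k) = dot (tr12 c) k.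
Proof. by rewrite /dot /=; ring. Qed.

Lemma dot_tr23 c k : dot c (tr23 k) = dot (tr23 c) k.
Proof. by rewrite /dot /=; ring. Qed.

(** * Orbits of weights under S_4 *)

Section SchreierBall.

Variables (T : finType) (nbrs : T -> seq T).

Definition closure_step (s : seq T) : seq T := undup (s ++ flatten (map nbrs s)).

Definition schreier_ball r (c : T) : seq T := iter r closure_step [:: c].

Lemma schreier_ball_uniq r c : uniq (schreier_ball r c).
Proof. by case: r => [|r] //=; apply: undup_uniq. Qed.

Lemma schreier_ball_sub (A : {set T}) r c :
  (forall x, x \in A -> {subset nbrs x <= A}) -> c \in A ->
  {subset schreier_ball r c <= A}.
Proof.
move=> A_closed cA; elim: r => [|r IHr] x /=; first by rewrite inE => /eqP ->.
rewrite mem_undup mem_cat => /orP [/IHr // | /flatten_mapP [y /IHr yA]].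
exact: A_closed.
Qed.

Lemma card_ge_schreier_ball (A : {set T}) r c :
  (forall x, x \in A -> {subset nbrs x <= A}) -> c \in A ->
  (size (schreier_ball r c) <= #|A|)%N.
Proof.
move=> A_closed cA; rewrite -(card_uniqP (schreier_ball_uniq r c)).
by apply/subset_leq_card/subsetP => x; apply: schreier_ball_sub.
Qed.

End SchreierBall.

Definition S4_dual_nbrs (c : Z3x3) : seq Z3x3 := [:: tr01_dual c; tr12 c; tr23 c].

(* Explicit enumerations: [vm_compute] is slow on the generic [enum] of Z3x3. *)
Definition Z3_seq : seq 'Z_3 := [:: 0; 1; -1].

Definition Z3x3_seq : seq Z3x3 :=
  [seq (ab, d) | ab <- [seq (a, b) | a <- Z3_seq, b <- Z3_seq], d <- Z3_seq].

Lemma mem_Z3x3_seq c : c \in Z3x3_seq.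
Proof.
have Z3_seqP (t : 'Z_3) : t \in Z3_seq by case: t => [[|[|[|//]]] ?]; vm_compute.
by case: c => [[a b] d]; apply: allpairs_f; [apply: allpairs_f|].
Qed.

Lemma card_ge_of_balls (nbrs : Z3x3 -> seq Z3x3) m (A : {set Z3x3}) :
    all (fun c => (c == 0) || (m <= size (schreier_ball nbrs 3 c))%N) Z3x3_seq ->
    (forall x, x \in A -> {subset nbrs x <= A}) -> (exists2 c : Z3x3, c != 0 & c \in A) ->
  (m <= #|A|)%N.
Proof.
move=> /allP balls A_closed [c c_neq0 cA].
apply: leq_trans (card_ge_schreier_ball 3 A_closed cA).
by have := balls c (mem_Z3x3_seq c); rewrite (negbTE c_neq0).
Qed.

Lemma S4_dual_balls :
  all (fun c => (c == 0) || (4 <= size (schreier_ball S4_dual_nbrs 3 c))%N) Z3x3_seq.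
Proof. by vm_compute. Qed.

Definition S4N_dual_nbrs (c : Z3x3) : seq Z3x3 := - c :: S4_dual_nbrs c.

Lemma S4N_dual_balls :
  all (fun c => (c == 0) || (6 <= size (schreier_ball S4N_dual_nbrs 3 c))%N) Z3x3_seq.
Proof. by vm_compute. Qed.

(** * Lower bounds *)

Definition resZ30 n (rho : mx_representation CC G5p3 n) k := rho (inZ30 (emb k)).

Section LowerBounds.

Variables (n : nat) (rho : mx_representation CC G5p3 n).

Lemma resZ30_0 : resZ30 rho 0 = 1%:M.
Proof. by rewrite /resZ30 emb0 inZ30_0 repr_mx1. Qed.

Lemma resZ30D k l : resZ30 rho (k + l) = resZ30 rho k *m resZ30 rho l.
Proof. by rewrite /resZ30 -repr_mxM ?in_G5p3 // embD inZ30D ?emb_Z30. Qed.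

Lemma resZ30_perm s (sg : Z3x3 -> Z3x3) : (forall k, emb k *m perm4_mx s = emb (sg k)) ->
  forall k, resZ30 rho k *m rho (inS4 s) = rho (inS4 s) *m resZ30 rho (sg k).
Proof.
move=> emb_s k; rewrite /resZ30 -!repr_mxM ?in_G5p3 // -emb_s inZ30_perm ?emb_Z30 //.
by rewrite conjgC.
Qed.

Lemma weights_S4_closed x : x \in weights (resZ30 rho) ->
  {subset S4_dual_nbrs x <= weights (resZ30 rho)}.
Proof.
have unit s := repr_mx_unit rho (in_G5p3 (inS4 s)).
move=> wx y; rewrite !in_cons in_nil orbF => /or3P [] /eqP ->.
- by apply: (weights_closed (unit _) tr01K dot_tr01 (resZ30_perm emb_tr01)).
- by apply: (weights_closed (unit _) tr12K dot_tr12 (resZ30_perm emb_tr12)).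
- by apply: (weights_closed (unit _) tr23K dot_tr23 (resZ30_perm emb_tr23)).
Qed.

Lemma dim_ge4 k : resZ30 rho k != 1%:M -> (4 <= n)%N.
Proof.
move=> nontriv; apply: leq_trans (card_weights resZ30_0 resZ30D).
exact: card_ge_of_balls S4_dual_balls weights_S4_closed (nonzero_weight resZ30_0 resZ30D nontriv).
Qed.

Lemma dim_ge6_of_real k : (forall g, map_mx conjc (rho g) = rho g) ->
  resZ30 rho k != 1%:M -> (6 <= n)%N.
Proof.
move=> rho_real nontriv; apply: leq_trans (card_weights resZ30_0 resZ30D).
apply: (card_ge_of_balls S4N_dual_balls) (nonzero_weight resZ30_0 resZ30D nontriv) => x wx y.
rewrite in_cons => /orP [/eqP -> | ]; last exact: weights_S4_closed.
by apply: weights_closedN wx => k'; apply: rho_real.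
Qed.

Lemma faithful_resZ30_neq1 k : mx_faithful rho -> k != 0 -> resZ30 rho k != 1%:M.
Proof.
move=> faithful k_neq0; apply: contra k_neq0 => /eqP triv.
have : inZ30 (emb k) \in rker rho by apply/rkerP; split; [apply: in_G5p3 | apply: triv].
by move/(subsetP faithful); rewrite inE inZ30_eq1 ?emb_Z30 // emb_eq0.
Qed.

End LowerBounds.

Definition e100 : Z3x3 := (1, 0, 0).

Lemma faithful_dim_ge4 n (rho : mx_representation CC G5p3 n) : mx_faithful rho -> (4 <= n)%N.
Proof. by move=> faithful; apply: (@dim_ge4 _ rho e100); apply: faithful_resZ30_neq1. Qed.

Lemma faithful_real_dim_ge6 n (rho : mx_representation RR G5p3 n) :
  mx_faithful rho -> (6 <= n)%N.
Proof.
move=> faithful; apply: (@dim_ge6_of_real _ (map_repr (real_complex RR) rho) e100).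
  move=> g; rewrite map_reprE -map_mx_comp; apply: eq_map_mx => x /=; exact: conjc_real.
by apply: faithful_resZ30_neq1; rewrite ?map_mx_faithful.
Qed.

(** * Irreducibility and realification in dimension 4 *)

Lemma unipotent_cube_eq1 (F : fieldType) m (M : 'M[F]_m) : 3%:R != 0 :> F ->
  (M - 1%:M) *m (M - 1%:M) = 0 -> M *m M *m M = 1%:M -> M = 1%:M.
Proof.
move=> nat3_neq0; have -> : M = (M - 1%:M) + 1%:M by rewrite subrK.
move: (M - 1%:M) => N; rewrite addrK => NN.
have NM : N *m (N + 1%:M) = N by rewrite mulmxDr mulmx1 NN add0r.
rewrite mulmxDl NM mul1mx mulmxDl !mulmxDl NM mul1mx !addrA -{2}[1%:M]add0r => /addIr /eqP.
by rewrite -mulr2n -mulrSr -scaler_nat scaler_eq0 (negbTE nat3_neq0) /= => /eqP ->; rewrite add0r.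
Qed.

Lemma sub_quot_trivial_unipotent (F : fieldType) (gT : finGroupType) (G : {group gT}) n
    (rG : mx_representation F G n) U (modU : mxmodule rG U) x : x \in G ->
    submod_repr modU x = 1%:M -> factmod_repr modU x = 1%:M ->
  (rG x - 1%:M) *m (rG x - 1%:M) = 0.
Proof.
move=> Gx sub1 fact1; set N := rG x - 1%:M.
have N_kills_U : val_submod (1%:M : 'M_(\rank U)) *m N = 0.
  by rewrite mulmxBr mulmx1 -val_submodJ // sub1 mulmx1 subrr.
have : (N <= val_submod (1%:M : 'M_(\rank U)))%MS.
  rewrite val_submod1 -in_factmod_eq0; have := in_factmodJ modU 1%:M Gx.
  rewrite fact1 mulmx1 mul1mx /in_factmod /= => fix1.
  by rewrite /N /in_factmod /= mulmxBl fix1 subrr.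
case/submxP => D N_D.
by rewrite {1}N_D -mulmxA N_kills_U mulmx0.
Qed.

Lemma faithful4_irreducible (rV : mx_representation CC G5p3 4) :
  mx_faithful rV -> mx_irreducible rV.
Proof.
move=> faithful; apply/mx_irrP; split=> // U modU U_neq0; apply: contraT => U_not_full.
have small_triv m (r : mx_representation CC G5p3 m) : (m < 4)%N -> resZ30 r e100 = 1%:M.
  by move=> m_lt4; apply/eqP; apply: contraTT m_lt4 => /dim_ge4; rewrite -leqNgt.
have rankU_lt4 : (\rank U < 4)%N by rewrite ltn_neqAle rank_leq_col andbT.
have M1 : resZ30 rV e100 = 1%:M.
  apply: unipotent_cube_eq1; first by rewrite pnatr_eq0.
    apply: (sub_quot_trivial_unipotent (modU := modU) (in_G5p3 _)); apply: small_triv => //.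
    by rewrite mxrank_coker ltn_subrL lt0n mxrank_eq0 U_neq0.
  by rewrite -!resZ30D (_ : e100 + e100 + e100 = 0) ?resZ30_0 //; apply/eqP; vm_compute.
by move: (faithful_resZ30_neq1 (k := e100) faithful isT); rewrite M1 eqxx.
Qed.

Lemma faithful4_not_real (rV : mx_representation CC G5p3 4) :
  mx_faithful rV -> ~ is_real_repr rV.
Proof.
move=> faithful [rR sim].
have : mx_faithful rR by rewrite -(map_mx_faithful (real_complex RR)) (mx_rsim_faithful sim).
by move/faithful_real_dim_ge6.
Qed.

Lemma realification_irr_dim (gT : finGroupType) (G : {group gT}) n
    (rV : mx_representation CC G n) m (rW : mx_representation CC G m) :
  mx_irreducible rV -> realification_of rV rW -> m = n \/ m = (n + n)%N.
Proof.
move=> /mx_irrP [_ irr] [I [U [P [_ _ simU _ [modN simW]]]]].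
rewrite (mxrank_rsim simW); case: (pickP (fun i => ~~ P i)) => [i nPi | all_P].
  right; congr (_ + _)%N; apply/eqP; rewrite -/(row_full _) -sub1mx.
  apply: submx_trans (sumsmx_sup i nPi (submx_refl (U i))); rewrite sub1mx.
  by have [modUi Ui_neq0 _] := simU i; apply: irr.
by left; rewrite big_pred0 // mxrank0 addn0.
Qed.

(** * Faithful representations of dimension 4 and 6 *)

Lemma sum_delta (I : finType) (R : pzSemiRingType) (a : I) (f : I -> R) :
  \sum_i (i == a)%:R * f i = f a.
Proof. by rewrite (bigD1 a) //= eqxx mul1r big1 ?addr0 // => i /negbTE ->; rewrite mul0r. Qed.

Lemma sdprod_mul1 (u v : Z30_rtimes_S4) : ((u * v)%g).1 = (u.1 * v.1)%g.
Proof. by []. Qed.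

Lemma sdprod_mul2 (u v : Z30_rtimes_S4) : ((u * v)%g).2 = Z30_act u.2 v.1 + v.2.
Proof. by []. Qed.

Lemma sdprod_snd_Z30 (u : Z30_rtimes_S4) : u.2 \in Z30.
Proof. by case: u => [[s x] /= /setXP []]. Qed.

Lemma sdprod_eq1 (u : Z30_rtimes_S4) : u.1 = 1%g -> u.2 = 0 -> u = 1%g.
Proof. by move=> u1 u2; apply: val_inj; rewrite /= [LHS]surjective_pairing u1 u2. Qed.

Section SdprodRepr.

Variables (F : fieldType) (m : nat).
Variables (Q : {perm 'I_4} -> 'M[F]_m) (E : 'rV['Z_3]_4 -> 'M[F]_m).
Hypotheses (Q1 : Q 1%g = 1%:M) (QM : forall s t, Q (s * t)%g = Q s *m Q t).
Hypotheses (E0 : E 0 = 1%:M) (ED : forall x y, y \in Z30 -> E (x + y) = E x *m E y).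
Hypothesis QE : forall s x, Q s *m E (x *m perm4_mx s) = E x *m Q s.

Definition sdprod_mx (u : Z30_rtimes_S4) := Q u.1 *m E u.2.

Lemma sdprod_mx_repr : mx_repr G5p3 sdprod_mx.
Proof.
split=> [|u v _ _]; first by rewrite /sdprod_mx /= Q1 E0 mul1mx.
rewrite /sdprod_mx sdprod_mul1 sdprod_mul2 Z30_actE ?sdprod_snd_Z30 // ED ?sdprod_snd_Z30 //.
by rewrite QM mulmxA -(mulmxA (Q u.1)) QE !mulmxA.
Qed.

End SdprodRepr.

Definition omega_diag (x : 'rV['Z_3]_4) : 'M[CC]_4 := diag_mx (\row_j omega_exp (x 0 j)).

Lemma omega_diag0 : omega_diag 0 = 1%:M.
Proof. by apply/matrixP => i j; rewrite !mxE. Qed.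

Lemma omega_diagD x y : y \in Z30 -> omega_diag (x + y) = omega_diag x *m omega_diag y.
Proof.
move=> _; rewrite /omega_diag mulmx_diag; congr diag_mx.
by apply/rowP => j; rewrite !mxE omega_expD.
Qed.

Lemma perm_omega_diag s x :
  perm_mx s *m omega_diag (x *m perm4_mx s) = omega_diag x *m perm_mx s.
Proof.
have -> : omega_diag (x *m perm4_mx s) = diag_mx (\row_j omega_exp (x 0 (s^-1 j)%g)).
  by congr diag_mx; apply/rowP => j; rewrite mxE [in RHS]mxE mul_perm4_mx.
rewrite -row_permE -[s in RHS]invgK -col_permE; apply/matrixP => i j; rewrite !mxE.
have [<- | ne] := eqVneq (s i) j; first by rewrite permK eqxx.
rewrite (_ : (i == (s^-1)%g j) = false) //.
by apply/negbTE; apply: contra ne => /eqP ->; rewrite permKV.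
Qed.

Definition rho4 : mx_representation CC G5p3 4 := MxRepresentation
  (sdprod_mx_repr (@perm_mx1 _ _) (@perm_mxM _ _) omega_diag0 omega_diagD perm_omega_diag).

Lemma rho4_faithful : mx_faithful rho4.
Proof.
apply/subsetP => u /rkerP [_ /matrixP rho4u]; rewrite inE.
have entry i j : omega_diag u.2 (u.1 i) j = (i == j)%:R.
  by move: (rho4u i j); rewrite /= /sdprod_mx -row_permE !mxE.
have u1 : u.1 = 1%g.
  apply/permP => i; rewrite perm1; move: (entry i (u.1 i)); rewrite !mxE eqxx mulr1n.
  by case: eqP => // _ /eqP; rewrite (negbTE (omega_exp_neq0 _)).
have u2 : u.2 = 0.
  apply/rowP => j; move: (entry j j); rewrite u1 perm1 !mxE eqxx mulr1n => /eqP.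
  by rewrite omega_exp_eq1 => /eqP.
by apply/eqP/sdprod_eq1.
Qed.

Definition pair4 := {S : {set 'I_4} | #|S| == 2}.

Local Notation N6 := #|{: pair4}|.

Lemma card_pair4 : N6 = 6%N.
Proof.
rewrite -[6%N]/('C(4, 2)); have := card_draws 'I_4 2%N; rewrite card_ord => <-.
by rewrite card_sig; apply: eq_card => S; rewrite inE.
Qed.

Definition pair01 : pair4 := exist _ [set i0; i1] (introT eqP (cards2 i0 i1)).

Definition pair_set (k : 'I_N6) : {set 'I_4} := val (enum_val k).

Definition pair_index (S : {set 'I_4}) : 'I_N6 := enum_rank (insubd pair01 S).

Lemma card_pair_set k : #|pair_set k| = 2%N.
Proof. exact/eqP/(valP (enum_val k)). Qed.

Lemma pair_indexK (S : {set 'I_4}) : #|S| = 2%N -> pair_set (pair_index S) = S.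
Proof. by move=> S2; rewrite /pair_set /pair_index enum_rankK insubdK // unfold_in /= S2. Qed.

Lemma pair_setK k : pair_index (pair_set k) = k.
Proof. by rewrite /pair_index /pair_set valKd enum_valK. Qed.

Lemma card_perm_imset (s : {perm 'I_4}) (S : {set 'I_4}) : #|s @: S| = #|S|.
Proof. exact: card_imset (@perm_inj _ s). Qed.

Lemma card_setC_pair (S : {set 'I_4}) : #|S| = 2%N -> #|~: S| = 2%N.
Proof. by move=> S2; apply/eqP; rewrite -(eqn_add2l 2) -{1}S2 cardsC card_ord. Qed.

Lemma perm_imsetC (s : {perm 'I_4}) (S : {set 'I_4}) : s @: (~: S) = ~: (s @: S).
Proof.
by apply/setP => y; rewrite inE -{1 2}(permKV s y) !mem_imset ?inE //; apply: perm_inj.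
Qed.

Definition pair_sum (x : 'rV['Z_3]_4) (S : {set 'I_4}) : 'Z_3 := \sum_(i in S) x 0 i.

Lemma pair_sumD x y S : pair_sum (x + y) S = pair_sum x S + pair_sum y S.
Proof. by rewrite /pair_sum -big_split; apply: eq_bigr => i _; rewrite mxE. Qed.

Lemma pair_sum0 S : pair_sum 0 S = 0.
Proof. by rewrite /pair_sum big1 // => i _; rewrite mxE. Qed.

Lemma pair_sumC x S : x \in Z30 -> pair_sum x (~: S) = - pair_sum x S.
Proof.
rewrite inE (bigID (mem S)) /= => /eqP sum0; apply/eqP; rewrite -addr_eq0 addrC -[X in _ == X]sum0.
by apply/eqP; congr (_ + _); apply: eq_bigl => i; rewrite ?inE.
Qed.

Lemma pair_sum_perm x (s : {perm 'I_4}) (S : {set 'I_4}) :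
  pair_sum (x *m perm4_mx s) (s @: S) = pair_sum x S.
Proof.
rewrite /pair_sum big_imset /=; last by move=> i j _ _; apply: perm_inj.
by apply: eq_bigr => i _; rewrite mul_perm4_mx permK.
Qed.

(* [coord1 t] and [coord2 t] are the coordinates of omega^t in the basis (1, - omega^2) of
   Z[omega], so the block of [pair_rot_mx x] on the rows and columns {S, ~: S} is the matrix
   of multiplication by omega^(pair_sum x S); this is consistent with the block seen from
   ~: S because pair_sum x (~: S) = - pair_sum x S. *)
Definition coord1 (t : 'Z_3) : int := match val t with 0 => 1 | 1 => -1 | _ => 0 end.
Definition coord2 (t : 'Z_3) : int := match val t with 0 => 0 | 1 => 1 | _ => -1 end.

Lemma coordD t u :
  coord1 (t + u) = coord1 t * coord1 u + coord2 t * coord2 (- u) /\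
  coord2 (t + u) = coord1 t * coord2 u + coord2 t * coord1 (- u).
Proof. by case: t => [[|[|[|//]]] ?]; case: u => [[|[|[|//]]] ?]. Qed.

Lemma coord_eq_bool t (b1 b2 : bool) :
  (coord1 t)%:~R = b1%:R :> RR -> (coord2 t)%:~R = b2%:R :> RR -> t = 0 /\ b1.
Proof.
rewrite !pmulrn => /intr_inj c1 /intr_inj c2.
by case: t c1 c2 => [[|[|[|//]]] ?]; case: b1; case: b2 => // _ _; split=> //; apply: val_inj.
Qed.

Definition pair_perm_mx (s : {perm 'I_4}) : 'M[RR]_N6 :=
  \matrix_(k, l) (l == pair_index (s @: pair_set k))%:R.

Definition pair_rot_mx (x : 'rV['Z_3]_4) : 'M[RR]_N6 :=
  \matrix_(k, l) ((coord1 (pair_sum x (pair_set k)))%:~R * (l == k)%:R +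
                  (coord2 (pair_sum x (pair_set k)))%:~R * (l == pair_index (~: pair_set k))%:R).

Lemma mul_pair_perm_mx s (B : 'M[RR]_N6) k l :
  (pair_perm_mx s *m B) k l = B (pair_index (s @: pair_set k)) l.
Proof.
rewrite mxE -(sum_delta (pair_index (s @: pair_set k)) (fun m => B m l)).
by apply: eq_bigr => m _; rewrite mxE.
Qed.

Lemma mul_pair_rot_mx x (B : 'M[RR]_N6) k l :
  (pair_rot_mx x *m B) k l =
    (coord1 (pair_sum x (pair_set k)))%:~R * B k l +
    (coord2 (pair_sum x (pair_set k)))%:~R * B (pair_index (~: pair_set k)) l.
Proof.
rewrite mxE; under eq_bigr => m _ do rewrite mxE mulrDl -!mulrA.
by rewrite big_split /= -!big_distrr /= !sum_delta.
Qed.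

Lemma pair_perm_mx1 : pair_perm_mx 1%g = 1%:M.
Proof.
apply/matrixP => k l; rewrite !mxE (eq_imset _ (@perm1 _)) imset_id pair_setK.
by rewrite eq_sym.
Qed.

Lemma pair_perm_mxM s t : pair_perm_mx (s * t)%g = pair_perm_mx s *m pair_perm_mx t.
Proof.
apply/matrixP => k l; rewrite mul_pair_perm_mx !mxE pair_indexK ?card_perm_imset ?card_pair_set //.
by rewrite -imset_comp; congr ((l == pair_index _)%:R); apply: eq_imset => i; rewrite /= permM.
Qed.

Lemma pair_rot_mx0 : pair_rot_mx 0 = 1%:M.
Proof. by apply/matrixP => k l; rewrite !mxE pair_sum0 mul0r addr0 mul1r eq_sym. Qed.

Lemma pair_rot_mxD x y : y \in Z30 -> pair_rot_mx (x + y) = pair_rot_mx x *m pair_rot_mx y.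
Proof.
move=> Z30y; apply/matrixP => k l; rewrite mul_pair_rot_mx !mxE.
rewrite pair_indexK ?card_setC_pair ?card_pair_set // pair_sumC // setCK pair_setK pair_sumD.
have [-> ->] := coordD (pair_sum x (pair_set k)) (pair_sum y (pair_set k)).
by rewrite !rmorphD !rmorphM /=; ring.
Qed.

Lemma pair_perm_rot_mx s x :
  pair_perm_mx s *m pair_rot_mx (x *m perm4_mx s) = pair_rot_mx x *m pair_perm_mx s.
Proof.
apply/matrixP => k l; rewrite mul_pair_perm_mx mul_pair_rot_mx !mxE.
by rewrite pair_indexK ?card_perm_imset ?card_pair_set // pair_sum_perm
  pair_indexK ?card_setC_pair ?card_pair_set // perm_imsetC.
Qed.

Definition rho6 : mx_representation RR G5p3 N6 := MxRepresentation
  (sdprod_mx_repr pair_perm_mx1 pair_perm_mxM pair_rot_mx0 pair_rot_mxD pair_perm_rot_mx).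

Lemma perm_fix_pairs (s : {perm 'I_4}) :
  (forall S : {set 'I_4}, #|S| = 2%N -> s @: S = S) -> s = 1%g.
Proof.
move=> fixS; apply/permP => i; rewrite perm1.
have [j [k [ij ik jk]]] := ord4_two_others i.
have in_pair l : i != l -> s i \in [set i; l].
  by move=> il; rewrite -(fixS [set i; l]) ?imset_f ?set21 // cards2 il.
case/set2P: (in_pair j ij) => [// | sij]; case/set2P: (in_pair k ik) => [// | sik].
by rewrite -sij sik eqxx in jk.
Qed.

Lemma Z3_eq0_of_pair_sums (a b c : 'Z_3) : a + b = 0 -> a + c = 0 -> b + c = 0 -> a = 0.
Proof.
move=> ab ac bc; have a3 : a *+ 3 = 0 by case: a {ab ac} => [[|[|[|//]]] ?]; apply: val_inj.
have -> : a = a *+ 3 - ((a + b) + (a + c) - (b + c)) by ring.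
by rewrite ab ac bc a3 addr0 !subrr.
Qed.

Lemma row_eq0_of_pair_sums (x : 'rV['Z_3]_4) :
  (forall i j, i != j -> x 0 i + x 0 j = 0) -> x = 0.
Proof.
move=> pair0; apply/rowP => i; rewrite mxE.
have [j [k [ij ik jk]]] := ord4_two_others i.
exact: Z3_eq0_of_pair_sums (pair0 _ _ ij) (pair0 _ _ ik) (pair0 _ _ jk).
Qed.

Lemma pair_sum2 x (i j : 'I_4) : i != j -> pair_sum x [set i; j] = x 0 i + x 0 j.
Proof. by move=> ij; rewrite /pair_sum big_setU1 ?big_set1 // inE. Qed.

Lemma rho6_faithful : mx_faithful rho6.
Proof.
apply/subsetP => u /rkerP [_ /matrixP rho6u]; rewrite inE.
have fix_pair k : u.1 @: pair_set k = pair_set k /\ pair_sum u.2 (pair_set k) = 0.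
  set S := u.1 @: pair_set k.
  have S2 : #|S| = 2%N by rewrite card_perm_imset card_pair_set.
  have S_neqC : (pair_index S == pair_index (~: S)) = false.
    apply/negbTE/eqP => /(congr1 pair_set); rewrite !pair_indexK ?card_setC_pair // => SC.
    by move: S2; rewrite -(setIid S) {2}SC setICr cards0.
  have entry l : pair_rot_mx u.2 (pair_index S) l = (k == l)%:R.
    by move: (rho6u k l); rewrite /= /sdprod_mx mul_pair_perm_mx => ->; rewrite mxE.
  have := entry (pair_index S); rewrite !mxE pair_indexK // eqxx S_neqC mulr1 mulr0 addr0.
  have := entry (pair_index (~: S)); rewrite !mxE pair_indexK // eq_sym S_neqC eqxx.
  rewrite mulr1 mulr0 add0r => coord2_eq coord1_eq.
  by have [sum0 /eqP ->] := coord_eq_bool coord1_eq coord2_eq; rewrite pair_indexK.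
have u1 : u.1 = 1%g.
  by apply: perm_fix_pairs => S S2; have := (fix_pair (pair_index S)).1; rewrite pair_indexK.
have u2 : u.2 = 0.
  apply: row_eq0_of_pair_sums => i j ij; have := (fix_pair (pair_index [set i; j])).2.
  by rewrite pair_indexK ?cards2 ?ij // pair_sum2.
by apply/eqP/sdprod_eq1.
Qed.

Lemma exists_faithful_real6 : exists rG : mx_representation RR G5p3 6, mx_faithful rG.
Proof. by rewrite -card_pair4; exists rho6; apply: rho6_faithful. Qed.

Theorem theorem5p3 :
  [/\ has_mdim CC G5p3 4,
      has_mdim RR G5p3 6,
      (forall rV : mx_representation CC G5p3 4,
          mx_faithful rV -> mx_irreducible rV /\ ~ is_real_repr rV) &
      (forall (rV : mx_representation CC G5p3 4)
              (rR : mx_representation RR G5p3 6)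
              m (rW : mx_representation CC G5p3 m),
          mx_faithful rV -> mx_faithful rR -> realification_of rV rW ->
          ~ mx_rsim (map_repr (real_complex RR) rR) rW)].
Proof.
split.
- split=> [|n rho]; [by exists rho4; apply: rho4_faithful | exact: faithful_dim_ge4].
- split=> [|n rho]; [exact: exists_faithful_real6 | exact: faithful_real_dim_ge6].
- by move=> rV faithful; split; [apply: faithful4_irreducible | apply: faithful4_not_real].
move=> rV rR m rW faithful _ realif /mxrank_rsim m6.
have [] := realification_irr_dim (faithful4_irreducible faithful) realif.
  by move=> m4; rewrite m4 in m6.
by move=> m8; rewrite m8 in m6.
Qed.
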